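(* Let $k,k'\ge1$ be integers and $\varepsilon>0$. Let $x,y\in\mathbb{R}^k_{\ge0}$, $x',y'\in\mathbb{R}^{k'}_{\ge0}$ and $r,r'\in\mathbb{R}$ satisfy $$(x^\top\mathbf{1}_k)^2+\|x\|^2=(x'^\top\mathbf{1}_{k'})^2+\|x'\|^2=\varepsilon^2$$ and $$x^\top\mathbf{1}_k+x'^\top\mathbf{1}_{k'}=r+r'+\varepsilon\sqrt2.$$ Then $\|x+y+r\mathbf{1}_k\|^2+\|x'+y'+r'\mathbf{1}_{k'}\|^2\ge\varepsilon^2$.
   Context: $\mathbf{1}_k$ denotes the all-ones vector in $\mathbb{R}^k$, $\|\cdot\|$ the Euclidean norm, and $\mathbb{R}^k_{\ge0}$ the vectors with nonnegative entries. *)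

From mathcomp Require Import all_boot all_order all_algebra.
From mathcomp Require Import all_classical all_reals.
Set Implicit Arguments. Unset Strict Implicit. Unset Printing Implicit Defensive.
Import Order.TTheory GRing.Theory Num.Theory.
Local Open Scope ring_scope.

Definition ones (R : realType) (k : nat) : 'cV[R]_k := const_mx 1.
Definition dotv (R : realType) (k : nat) (x y : 'cV[R]_k) : R :=
  \sum_(i < k) x i 0 * y i 0.
Definition sqnorm (R : realType) (k : nat) (x : 'cV[R]_k) : R := dotv x x.
Definition nonneg_vec (R : realType) (k : nat) (x : 'cV[R]_k) : Prop :=
  forall i, 0 <= x i 0.

From mathcomp Require Import all_boot all_order all_algebra.
From mathcomp Require Import all_classical all_reals.
From mathcomp Require Import ring lra.
Import Order.TTheory GRing.Theory Num.Theory.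
Set Implicit Arguments. Unset Strict Implicit.
Local Open Scope ring_scope.

(* Write s = x^T 1 and q = ||x||^2 for one block.  Since x >= 0 and y >= 0,
   ||x + y + r 1||^2 >= 2 l (q + r s) - l^2 q for every l >= 0 (expand
   ||x + y + r 1 - l x||^2 >= 0).  As q <= s^2 and s^2 + q = eps^2, the ratio
   p = eps / s lies in [1, sqrt 2].  Taking l = a / s in the first block and
   l = a / s' in the second, the constraint on r + r' turns the sum of the two
   bounds into 2 a M - a^2 D with M = eps (p + p' - sqrt 2) > 0 and
   D = p^2 + p'^2 - 2, and M^2 - eps^2 D = 2 eps^2 (sqrt 2 - p) (sqrt 2 - p') >= 0.
   The choice a = eps^2 / M then gives at least eps^2. *)

Lemma quadratic_lower_bound (R : realFieldType) (e M D : R) :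
  0 < M -> e ^+ 2 * D <= M ^+ 2 ->
  e ^+ 2 <= 2 * (e ^+ 2 / M) * M - (e ^+ 2 / M) ^+ 2 * D.
Proof.
move=> M_gt0 eD_le.
have M_neq0 : M != 0 by rewrite gt_eqF.
have -> : 2 * (e ^+ 2 / M) * M - (e ^+ 2 / M) ^+ 2 * D
          = 2 * e ^+ 2 - e ^+ 2 * (e ^+ 2 * D) / M ^+ 2 by field.
suff : e ^+ 2 * (e ^+ 2 * D) / M ^+ 2 <= e ^+ 2 by lra.
by rewrite ler_pdivrMr ?exprn_gt0 // ler_wpM2l ?sqr_ge0.
Qed.

Section OneBlock.
Variables (R : rcfType) (e s q r Z : R).
Hypotheses (e_gt0 : 0 < e) (s_ge0 : 0 <= s) (q_ge0 : 0 <= q)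
  (q_le_s2 : q <= s ^+ 2) (s2_q : s ^+ 2 + q = e ^+ 2).

Lemma block_sum_gt0 : 0 < s.
Proof.
rewrite lt_neqAle s_ge0 andbT; apply/eqP => s0.
move: q_le_s2 s2_q; rewrite -s0 expr0n /= add0r => q_le0 q_e2.
by move: q_le0; rewrite q_e2 leNgt exprn_gt0.
Qed.

Lemma block_ratio_ge1 : 1 <= e / s.
Proof.
rewrite ler_pdivlMr ?block_sum_gt0 // mul1r.
by rewrite -(@ler_pXn2r _ 2) ?nnegrE ?(ltW e_gt0) // -s2_q lerDl.
Qed.

Lemma block_ratio_le_sqrt2 : e / s <= Num.sqrt 2.
Proof.
have s_gt0 := block_sum_gt0.
have e2_le : e ^+ 2 <= 2 * s ^+ 2 by move: q_le_s2 s2_q; lra.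
rewrite -(@ler_pXn2r _ 2) ?nnegrE ?sqrtr_ge0 ?divr_ge0 ?(ltW e_gt0) ?(ltW s_gt0) //.
by rewrite sqr_sqrtr // expr_div_n ler_pdivrMr ?exprn_gt0.
Qed.

Hypothesis Z_ge : forall l, 0 <= l -> 2 * l * (q + r * s) - l ^+ 2 * q <= Z.

Lemma block_lower_bound a : 0 <= a ->
  2 * a * (e * (e / s) - s + r) - a ^+ 2 * ((e / s) ^+ 2 - 1) <= Z.
Proof.
have s_gt0 := block_sum_gt0; have s_neq0 : s != 0 by rewrite gt_eqF.
move=> a_ge0; apply: le_trans (Z_ge (divr_ge0 a_ge0 (ltW s_gt0))).
have -> : q = e ^+ 2 - s ^+ 2 by rewrite -s2_q; ring.
by rewrite le_eqVlt; apply/orP; left; apply/eqP; field.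
Qed.

End OneBlock.

Lemma two_block_bound (R : rcfType) (e s q r Z s' q' r' Z' : R) :
  0 < e ->
  0 <= s -> 0 <= q -> q <= s ^+ 2 -> s ^+ 2 + q = e ^+ 2 ->
  0 <= s' -> 0 <= q' -> q' <= s' ^+ 2 -> s' ^+ 2 + q' = e ^+ 2 ->
  s + s' = r + r' + e * Num.sqrt 2 ->
  (forall l, 0 <= l -> 2 * l * (q + r * s) - l ^+ 2 * q <= Z) ->
  (forall l, 0 <= l -> 2 * l * (q' + r' * s') - l ^+ 2 * q' <= Z') ->
  e ^+ 2 <= Z + Z'.
Proof.
move=> e_gt0 s_ge0 q_ge0 qs s2q s'_ge0 q'_ge0 q's s'2q' hr hZ hZ'.
have p_ge1 := block_ratio_ge1 e_gt0 s_ge0 q_ge0 qs s2q.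
have p'_ge1 := block_ratio_ge1 e_gt0 s'_ge0 q'_ge0 q's s'2q'.
have p_le := block_ratio_le_sqrt2 e_gt0 s_ge0 qs s2q.
have p'_le := block_ratio_le_sqrt2 e_gt0 s'_ge0 q's s'2q'.
set p := e / s in p_ge1 p_le; set p' := e / s' in p'_ge1 p'_le.
set w := Num.sqrt (2 : R) in hr p_le p'_le *.
have w2 : w ^+ 2 = 2 by rewrite sqr_sqrtr.
set M := e * (p + p' - w); set D := p ^+ 2 + p' ^+ 2 - 2.
have M_gt0 : 0 < M by apply: mulr_gt0 => //; nra.
have eD_le : e ^+ 2 * D <= M ^+ 2.
  have -> : M ^+ 2 = e ^+ 2 * D + 2 * e ^+ 2 * ((w - p) * (w - p')).
    by rewrite /M /D; nra.
  have w_pp' : 0 <= (w - p) * (w - p') by rewrite mulr_ge0 ?subr_ge0.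
  by rewrite lerDl; apply: mulr_ge0 => //; rewrite pmulr_rge0 ?sqr_ge0.
apply: le_trans (quadratic_lower_bound M_gt0 eD_le) _.
have a_ge0 : 0 <= e ^+ 2 / M by rewrite divr_ge0 ?sqr_ge0 ?ltW.
have := block_lower_bound e_gt0 s_ge0 qs s2q hZ a_ge0.
have := block_lower_bound e_gt0 s'_ge0 q's s'2q' hZ' a_ge0.
rewrite -/p -/p' /M /D; nra.
Qed.

Lemma dotv_ones (R : realType) (k : nat) (x : 'cV[R]_k) :
  dotv x (ones R k) = \sum_i x i 0.
Proof. by apply: eq_bigr => i _; rewrite mxE mulr1. Qed.

Lemma dotv_ones_ge0 (R : realType) (k : nat) (x : 'cV[R]_k) :
  nonneg_vec x -> 0 <= dotv x (ones R k).
Proof. by move=> x_ge0; rewrite dotv_ones sumr_ge0. Qed.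

Lemma sqnorm_ge0 (R : realType) (k : nat) (x : 'cV[R]_k) : 0 <= sqnorm x.
Proof. by rewrite sumr_ge0 // => i _; rewrite -expr2 sqr_ge0. Qed.

Lemma sqnorm_le_sqr_dotv_ones (R : realType) (k : nat) (x : 'cV[R]_k) :
  nonneg_vec x -> sqnorm x <= dotv x (ones R k) ^+ 2.
Proof.
move=> x_ge0; rewrite dotv_ones expr2 mulr_sumr.
apply: ler_sum => i _; rewrite mulrC ler_wpM2r //.
by rewrite (bigD1 i) //= lerDl sumr_ge0.
Qed.

Lemma sqnorm_shift_ge (R : realType) (k : nat) (x y : 'cV[R]_k) (r l : R) :
  nonneg_vec x -> nonneg_vec y -> 0 <= l ->
  2 * l * (sqnorm x + r * dotv x (ones R k)) - l ^+ 2 * sqnorm x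
    <= sqnorm (x + y + r *: ones R k).
Proof.
move=> x_ge0 y_ge0 l_ge0.
have -> : 2 * l * (sqnorm x + r * dotv x (ones R k)) - l ^+ 2 * sqnorm x
    = \sum_i (2 * l * (x i 0 * x i 0 + r * x i 0) - l ^+ 2 * (x i 0 * x i 0)).
  by rewrite sumrB -!mulr_sumr big_split /= -mulr_sumr dotv_ones.
apply: ler_sum => i _.
rewrite !mxE mulr1.
have := mulr_ge0 l_ge0 (mulr_ge0 (x_ge0 i) (y_ge0 i)).
have := sqr_ge0 (x i 0 + y i 0 + r - l * x i 0).
nra.
Qed.

Theorem lemma1 (R : realType) (k k' : nat) (hk : (1 <= k)%N) (hk' : (1 <= k')%N)
  (eps : R) (heps : 0 < eps)
  (x y : 'cV[R]_k) (x' y' : 'cV[R]_k') (r r' : R)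
  (hx : nonneg_vec x) (hy : nonneg_vec y)
  (hx' : nonneg_vec x') (hy' : nonneg_vec y')
  (h1 : (dotv x (ones R k)) ^+ 2 + sqnorm x = eps ^+ 2)
  (h2 : (dotv x' (ones R k')) ^+ 2 + sqnorm x' = eps ^+ 2)
  (h3 : dotv x (ones R k) + dotv x' (ones R k') = r + r' + eps * Num.sqrt 2) :
  sqnorm (x + y + r *: ones R k) + sqnorm (x' + y' + r' *: ones R k') >= eps ^+ 2.
Proof.
apply: (two_block_bound heps _ (sqnorm_ge0 x) _ h1 _ (sqnorm_ge0 x') _ h2 h3).
- exact: dotv_ones_ge0.
- exact: sqnorm_le_sqr_dotv_ones.
- exact: dotv_ones_ge0.
- exact: sqnorm_le_sqr_dotv_ones.
- by move=> l; apply: sqnorm_shift_ge.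
- by move=> l; apply: sqnorm_shift_ge.
Qed.
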